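(* For all constants $c', c_{11}>0$ there exist positive constants $c_1, c_2, c_3$ (depending only on $c', c_{11}$, not on $M,\varepsilon$) such that the following holds. Let $\varepsilon>0$ and $M \ge \frac{1}{\varepsilon}$, and let $\Phi_1,\Phi_2,\dots$ be i.i.d. nonnegative random variables with \[ \mathbb{P}(\Phi_1>z)\leq \exp(-c'M^{3/2}\sqrt{z})\quad \text{for all } z\geq 4\varepsilon^2/M, \] and $\mathbb{E}(\Phi_1)\leq c_{11}\varepsilon^2/M$. Then for all $n \ge c_3\varepsilon M$, \[ \mathbb{P}\Big(\sum_{i=1}^n\Phi_i\geq 4c_{11}n\frac{\varepsilon^2}{M}\Big)\leq \Big(1 + \frac{c_1}{n^{2/5}\left(\varepsilon M\right)^{8/5}}\Big)\exp\Big(-c_2 (\varepsilon M)^{4/5}n^{1/5}\Big). \] *)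

From HB Require Import structures.
From mathcomp Require Import all_boot all_order all_algebra.
From mathcomp Require Import all_classical all_reals all_analysis.
Set Implicit Arguments. Unset Strict Implicit. Unset Printing Implicit Defensive.
Import Order.TTheory GRing.Theory Num.Theory.
Local Open Scope classical_set_scope.
Local Open Scope ring_scope.

Definition mutually_independent {d} {T : measurableType d} {R : realType}
  (P : probability T R) (X : nat -> T -> R) : Prop :=
  forall (I : seq nat) (A : nat -> set R), uniq I ->
    (forall i, measurable (A i)) ->
    P (\big[setI/setT]_(i <- I) (X i @^-1` A i)) =
    (\prod_(i <- I) P (X i @^-1` A i))%E.

Definition identically_distributed {d} {T : measurableType d} {R : realType}
  (P : probability T R) (X : nat -> T -> R) : Prop :=
  forall (i : nat) (A : set R), measurable A ->
    P (X i @^-1` A) = P (X 0%N @^-1` A).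

(* i.i.d. sequence of real random variables (indices 0,1,2,... play the role
   of Phi_1, Phi_2, ...). *)
Definition iid {d} {T : measurableType d} {R : realType}
  (P : probability T R) (X : nat -> T -> R) : Prop :=
  [/\ forall i, measurable_fun setT (X i),
      mutually_independent P X & identically_distributed P X].

From HB Require Import structures.
From mathcomp Require Import all_boot all_order all_algebra.
From mathcomp Require Import all_classical all_reals all_analysis.
From mathcomp Require Import measurable_realfun lra ring.
Import Order.TTheory GRing.Theory Num.Theory.
Local Open Scope classical_set_scope.
Local Open Scope ring_scope.

(* Split the event according to whether some Phi_i exceeds the level
   L = N h.  If one does, the union bound and the tail hypothesis give
   n exp(-c' M^(3/2) sqrt L).  Otherwise round every Phi_i up to the grid
   of multiples of h: the event becomes a finite union, over the grid patterns f with
   S <= sum_i f_i h, of intersections of cell events, so the product rule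
   for independent events suffices, and an exponential Markov bound over
   the patterns gives exp(-tS) (sum_k p_k exp(tkh))^n, where p_k is the
   probability that Phi_1 lies in the k-th cell.  For tL <= 1/2 we have
   exp(tkh) <= 1 + 2tkh, so the moment sum is at most 1 + 2t(h + E Phi_1).
   Taking h = c11 eps^2/(2M), t = 1/(2L) and N ~ (n/(eps M))^(4/5) makes
   both terms at most exp(-(eps M)^(4/5) n^(1/5) / 2). *)

Lemma expR_le1D2x (R : realType) (x : R) :
  0 <= x -> x <= 1 / 2 -> expR x <= 1 + 2 * x.
Proof.
move=> x_ge0 x_le.
have ex_gt0 := expR_gt0 x.
(* exp x <= 1 / (1 - x) <= 1 + 2 x *)
have le1 : (1 - x) * expR x <= 1.
  have := ler_wpM2r (ltW ex_gt0) (expR_ge1Dx (- x)).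
  by rewrite expRN mulVf ?gt_eqF.
have : 0 <= (1 - (1 - x) * expR x) * (1 + 2 * x) by apply: mulr_ge0; lra.
have : 0 <= expR x * (x * (1 - 2 * x)) by rewrite mulr_ge0 ?mulr_ge0 //; lra.
nra.
Qed.

Lemma chernoff_sum_prod_le (R : realType) (I : finType) (n : nat) (p x : I -> R)
    (S t : R) :
  (forall k, 0 <= p k) -> 0 <= t ->
  \sum_(f : {ffun 'I_n -> I} | S <= \sum_(i < n) x (f i)) \prod_(i < n) p (f i)
    <= expR (- (t * S)) * (\sum_k p k * expR (t * x k)) ^+ n.
Proof.
move=> p_ge0 t_ge0.
rewrite -[n in _ ^+ n]card_ord -prodr_const bigA_distr_bigA /= mulr_sumr.
rewrite [leRHS](bigID (fun f : {ffun 'I_n -> I} => S <= \sum_(i < n) x (f i))).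
rewrite /= -[leLHS]addr0 lerD //; last first.
  apply: sumr_ge0 => f _; rewrite mulr_ge0 ?expR_ge0 // prodr_ge0 // => i _.
  by rewrite mulr_ge0 ?expR_ge0.
apply: ler_sum => f Sf.
rewrite big_split /= -expR_sum mulrCA -expRD ler_peMr ?prodr_ge0 //.
by rewrite -[leLHS]expR0 ler_expR -mulr_sumr addrC subr_ge0 ler_wpM2l.
Qed.

Definition cell {R : realDomainType} (h : R) (k : nat) : set R :=
  [set` `]((k%:R - 1) * h), (k%:R * h)]].

Lemma cell_uniq (R : realFieldType) (h y : R) (j k : nat) :
  0 < h -> cell h j y -> cell h k y -> j = k.
Proof.
move=> h_gt0; rewrite /cell /= !in_itv /= => /andP[lo_j hi_j] /andP[lo_k hi_k].
have jk : j%:R < k%:R + 1 :> R.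
  by have := lt_le_trans lo_j hi_k; rewrite ltr_pM2r // => ?; lra.
have kj : k%:R < j%:R + 1 :> R.
  by have := lt_le_trans lo_k hi_j; rewrite ltr_pM2r // => ?; lra.
by apply/eqP; rewrite eqn_leq; apply/andP; split;
  rewrite -ltnS -(ltr_nat R) -natr1.
Qed.

Lemma cell_cover (R : realFieldType) (h y : R) (N : nat) :
  0 < h -> 0 <= y -> y <= N%:R * h -> exists k : 'I_N.+1, cell h k y.
Proof.
move=> h_gt0 y_ge0; elim: N => [|N IH] yN.
  by exists ord0; rewrite /cell /= in_itv /=; apply/andP; split; nra.
have [/IH[k hk]|yN'] := leP y (N%:R * h).
  by exists (widen_ord (leqnSn _) k).
by exists ord_max; rewrite /cell /= in_itv /= -natr1; apply/andP; split; nra.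
Qed.

Lemma measure_bigsetU_le {d} {T : measurableType d} {R : realType}
    (mu : {measure set T -> \bar R}) {I : Type} (s : seq I) (Q : pred I)
    (F : I -> set T) :
  (forall i, measurable (F i)) ->
  (mu (\big[setU/set0]_(i <- s | Q i) F i) <= \sum_(i <- s | Q i) mu (F i))%E.
Proof.
move=> mF; elim: s => [|i s IH]; first by rewrite !big_nil measure0.
rewrite !big_cons; case: ifP => // Qi.
apply: le_trans (measureU2 _ _ _) (leeD2l _ IH) => //.
exact: bigsetU_measurable.
Qed.

Lemma sum_disjoint_le_integral {d} {T : measurableType d} {R : realType}
    (mu : {measure set T -> \bar R}) (K : nat) (U : nat -> set T)
    (c : nat -> R) (g : T -> \bar R) :
  (forall k, measurable (U k)) -> (forall j k x, U j x -> U k x -> j = k) ->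
  (forall k, 0 <= c k) -> (forall k x, U k x -> ((c k)%:E <= g x)%E) ->
  measurable_fun setT g -> (forall x, (0 <= g x)%E) ->
  (\sum_(k < K) (c k)%:E * mu (U k) <= \int[mu]_x g x)%E.
Proof.
move=> mU U_disj c_ge0 c_le_g mg g_ge0.
have mcU k : measurable_fun setT (fun x => (c k * \1_(U k) x)%:E).
  by apply/measurable_EFinP/measurable_funM => //; exact: measurable_indic.
have cU_ge0 k x : (0 <= (c k * \1_(U k) x)%:E)%E.
  by rewrite lee_fin mulr_ge0 // indicE.
have -> : (\sum_(k < K) (c k)%:E * mu (U k) =
           \int[mu]_x \sum_(k < K) (c k * \1_(U k) x)%:E)%E.
  rewrite ge0_integral_sum //; apply: eq_bigr => k _.
  under eq_integral do rewrite EFinM.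
  rewrite ge0_integralZl ?lee_fin //; last first.
    exact/measurable_EFinP/measurable_indic.
  by rewrite integral_indic // setIT.
apply: ge0_le_integral => //; [by move=> x _; exact: sume_ge0 | |].
  exact: emeasurable_sum.
move=> x _.
have [[j Uj]|noU] := pselect (exists k : 'I_K, U k x); last first.
  rewrite big1 // => k _; rewrite indicE memNset ?mulr0 // => Uk.
  by apply: noU; exists k.
rewrite (bigD1 j) //= big1 ?adde0 => [|k kj].
  by rewrite indicE mem_set // mulr1; exact: c_le_g.
rewrite indicE memNset ?mulr0 // => Uk; move: kj.
by rewrite (_ : k = j) ?eqxx //; apply: val_inj; exact: U_disj Uk Uj.
Qed.

Section iid_sum_deviation.
Context {d} {T : measurableType d} {R : realType} {P : probability T R}
  {Y : nat -> T -> R}.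
Hypotheses (iidY : iid P Y) (Y_ge0 : forall i x, 0 <= Y i x).

Let mY i (B : set R) : measurable B -> measurable (Y i @^-1` B).
Proof. by case: iidY => mYi _ _ mB; rewrite -[_ @^-1` _]setTI; exact: mYi. Qed.

Let mY_cell i h k : measurable (Y i @^-1` cell h k).
Proof. by apply: mY; exact: measurable_itv. Qed.

Let cell_prob_fin h k : P (Y 0 @^-1` cell h k) \is a fin_num.
Proof. by apply: fin_num_measure; exact: mY_cell. Qed.

Let cell_prob h k := fine (P (Y 0 @^-1` cell h k)).

Lemma iid_prob_bigcap n (A : 'I_n -> set R) : (forall j, measurable (A j)) ->
  P (\big[setI/setT]_(j < n) (Y j @^-1` A j)) =
  (\prod_(j < n) P (Y 0 @^-1` A j))%E.
Proof.
case: iidY => _ indep ident mA.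
pose B j := if insub j is Some i then A i else setT.
have mB j : measurable (B j) by rewrite /B; case: insub.
have BA (j : 'I_n) : B j = A j by rewrite /B valK.
under eq_bigr do rewrite -BA.
rewrite -(big_mkord xpredT (fun j => Y j @^-1` B j)) indep //; last first.
  exact: iota_uniq.
by rewrite big_mkord; apply: eq_bigr => j _; rewrite ident // BA.
Qed.

Lemma sum_ge_sub_cells h N n S : 0 < h ->
  [set x | S <= \sum_(i < n) Y i x] `<=`
  (\big[setU/set0]_(f : {ffun 'I_n -> 'I_N.+1} |
                    S <= \sum_(i < n) (f i)%:R * h)
     \big[setI/setT]_(j < n) (Y j @^-1` cell h (f j)))
  `|` \big[setU/set0]_(j < n) (Y j @^-1` [set` `]N%:R * h, +oo[]).
Proof.
move=> h_gt0 x /= Sx.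
have [[j Yj]|small] := pselect (exists j : 'I_n, N%:R * h < Y j x).
  right; apply: (@bigsetU_sup _ j n (fun j => Y j @^-1` _) (ltn_ord j)).
  by rewrite /= in_itv /= andbT.
have inCell (j : 'I_n) : exists k : 'I_N.+1, cell h k (Y j x).
  apply: cell_cover => //; rewrite leNgt; apply/negP => Yj; apply: small.
  by exists j.
have [k kP] := choice inCell.
left; rewrite (bigD1 [ffun j => k j]) /=; [left|].
  by rewrite -bigcap_seq => j _ /=; rewrite ffunE.
apply: le_trans Sx _; apply: ler_sum => j _; rewrite ffunE.
by have := kP j; rewrite /cell /= in_itv /= => /andP[].
Qed.

Lemma prob_sum_ge_le_cells h N n S t : 0 < h -> 0 <= t ->
  (P [set x | (S <= \sum_(i < n) Y i x)%R] <=
    (expR (- (t * S)) *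
       (\sum_(k < N.+1) cell_prob h k * expR (t * (k%:R * h))) ^+ n)%:E
    + \sum_(j < n) P (Y j @^-1` [set` `](N%:R * h)%R, +oo[]))%E.
Proof.
move=> h_gt0 t_ge0.
have mE : measurable [set x | S <= \sum_(i < n) Y i x].
  rewrite -[X in measurable X]setTI; apply: measurable_fun_le => //.
  by apply: measurable_sum => i; case: iidY.
have := sum_ge_sub_cells h N n S h_gt0.
set C := (X in _ `<=` X `|` _); set F := (X in _ `<=` _ `|` X) => sub.
have mcells (f : {ffun 'I_n -> 'I_N.+1}) :
    measurable (\big[setI/setT]_(j < n) (Y j @^-1` cell h (f j))).
  exact: bigsetI_measurable.
have mC : measurable C by exact: bigsetU_measurable.
have mF : measurable F.
  by apply: bigsetU_measurable => j _; apply: mY; exact: measurable_itv.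
have mCF := measurableU _ _ mC mF.
apply: le_trans (le_measure _ (mem_set mE) (mem_set mCF) sub) _.
apply: le_trans (measureU2 P mC mF) _; apply: leeD; last first.
  by apply: measure_bigsetU_le => j; apply: mY; exact: measurable_itv.
apply: le_trans (measure_bigsetU_le P _ _ _ mcells) _.
under eq_bigr => f _.
  move: (iid_prob_bigcap _ (fun j : 'I_n => cell h (f j))
           (fun j => measurable_itv _)) => /= ->.
  under eq_bigr do rewrite -[P _]fineK ?cell_prob_fin //.
  rewrite prodEFin.
  over.
rewrite sumEFin lee_fin.
apply: (@chernoff_sum_prod_le _ _ n (fun k : 'I_N.+1 => cell_prob h k)
          (fun k : 'I_N.+1 => k%:R * h) S t) => // k.
exact/fine_ge0/measure_ge0.
Qed.

Lemma cell_mgf_le h N t m : 0 < h -> 0 <= t -> t * (N%:R * h) <= 1 / 2 ->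
  ('E_P[Y 0] <= m%:E)%E ->
  \sum_(k < N.+1) cell_prob h k * expR (t * (k%:R * h))
    <= 1 + 2 * t * (h + m).
Proof.
move=> h_gt0 t_ge0 tNh EY.
have th_ge0 : 0 <= t * h by rewrite mulr_ge0 // ltW.
pose c (k : nat) := 1 + 2 * (t * (k%:R * h)).
have tkh_ge0 (k : nat) : 0 <= t * (k%:R * h).
  by rewrite mulr_ge0 // mulr_ge0 // ltW.
have c_ge0 k : 0 <= c k by have := tkh_ge0 k; rewrite /c; lra.
apply: (@le_trans _ _ (\sum_(k < N.+1) c k * cell_prob h k)).
  apply: ler_sum => k _; rewrite mulrC ler_wpM2r ?fine_ge0 ?measure_ge0 //.
  apply: expR_le1D2x => //; apply: le_trans tNh.
  apply: ler_wpM2l => //; apply: ler_wpM2r; first exact: ltW.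
  by rewrite ler_nat -ltnS.
rewrite -lee_fin -sumEFin.
under eq_bigr do rewrite EFinM fineK ?cell_prob_fin //.
pose g x := ((1 + 2 * t * h)%:E + (2 * t)%:E * (Y 0 x)%:E)%E.
have Y0_ge0 x : (0 <= (2 * t)%:E * (Y 0 x)%:E)%E.
  by rewrite -EFinM lee_fin mulr_ge0 // mulr_ge0.
apply: (@le_trans _ _ (\int[P]_x g x)%E).
  apply: (@sum_disjoint_le_integral _ _ _ P _ (fun k => Y 0 @^-1` cell h k)).
- by move=> k; exact: mY_cell.
- by move=> j k x; exact: cell_uniq.
- exact: c_ge0.
- move=> k x; rewrite /cell /= in_itv /= => /andP[lo _].
  rewrite /g -EFinM -EFinD lee_fin /c.
  have : t * (k%:R * h) <= t * (Y 0 x + h).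
    by apply: ler_wpM2l => //; apply: ltW; lra.
  lra.
- apply: emeasurable_funD => //; apply: emeasurable_funM => //.
  by apply/measurable_EFinP; case: iidY.
- by move=> x; rewrite /g adde_ge0 // lee_fin; lra.
have mY0 : measurable_fun setT (fun x => (Y 0 x)%:E).
  by apply/measurable_EFinP; case: iidY.
rewrite /g ge0_integralD //; last 2 first.
- by move=> x _; rewrite lee_fin; lra.
- exact: measurable_funeM.
rewrite integral_cst // [X in (_ * X + _)%E](_ : _ = 1%E); last first.
  exact: probability_setT.
rewrite mule1 ge0_integralZl //; last 2 first.
- by move=> x _; rewrite lee_fin.
- by rewrite lee_fin mulr_ge0.
have -> : (\int[P]_x (Y 0 x)%:E = 'E_P[Y 0])%E by rewrite unlock.
apply: le_trans (leeD2l _ (lee_wpmul2l _ EY)) _.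
  by rewrite lee_fin mulr_ge0.
by rewrite -EFinM -EFinD lee_fin; lra.
Qed.

Lemma iid_sum_ge_le h N n t m q S : 0 < h -> 0 <= t ->
  t * (N%:R * h) <= 1 / 2 -> ('E_P[Y 0] <= m%:E)%E ->
  (P [set x | (N%:R * h < Y 0 x)%R] <= q%:E)%E ->
  (P [set x | (S <= \sum_(i < n) Y i x)%R] <=
    (expR (n%:R * (2 * t * (h + m)) - t * S) + n%:R * q)%:E)%E.
Proof.
move=> h_gt0 t_ge0 tNh EY tail.
apply: le_trans (prob_sum_ge_le_cells _ N n S _ h_gt0 t_ge0) _.
rewrite EFinD leeD //.
  rewrite lee_fin [X in _ <= expR X]addrC expRD expRM_natl.
  apply: ler_wpM2l; first exact: expR_ge0.
  apply: lerXn2r; rewrite ?nnegrE ?expR_ge0 //.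
    apply: sumr_ge0 => k _.
    by rewrite mulr_ge0 ?expR_ge0 ?fine_ge0 ?measure_ge0.
  exact: le_trans (cell_mgf_le _ N _ _ h_gt0 t_ge0 tNh EY) (expR_ge1Dx _).
have [_ _ ident] := iidY.
apply: (@le_trans _ _ (\sum_(j < n) q%:E)%E).
  apply: lee_sum => j _; rewrite ident; last exact: measurable_itv.
  suff -> : Y 0 @^-1` [set` `]N%:R * h, +oo[] = [set x | N%:R * h < Y 0 x].
    by [].
  by apply/seteqP; split => x /=; rewrite in_itv /= andbT.
by rewrite sumEFin sumr_const card_ord mulr_natl.
Qed.

Lemma iid_sum_ge_level_le h N n q : 0 < h -> (0 < N)%N ->
  ('E_P[Y 0] <= (2 * h)%:E)%E ->
  (P [set x | (N%:R * h < Y 0 x)%R] <= q%:E)%E ->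
  (P [set x | (8 * n%:R * h <= \sum_(i < n) Y i x)%R] <=
    (expR (- (n%:R / N%:R)) + n%:R * q)%:E)%E.
Proof.
move=> h_gt0 N_gt0 EY tail.
have Nr_gt0 : 0 < N%:R :> R by rewrite ltr0n.
pose t := 1 / (2 * (N%:R * h)).
have t_ge0 : 0 <= t by rewrite divr_ge0 // mulr_ge0 // mulr_ge0 // ltW.
have tNh : t * (N%:R * h) <= 1 / 2.
  by rewrite /t [leLHS](_ : _ = 1 / 2) //; field; rewrite !gt_eqF.
apply: le_trans (iid_sum_ge_le _ _ _ _ _ _ _ h_gt0 t_ge0 tNh EY tail) _.
suff -> : n%:R * (2 * t * (h + 2 * h)) - t * (8 * n%:R * h) = - (n%:R / N%:R).
  by [].
by rewrite /t; field; rewrite !gt_eqF.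
Qed.

End iid_sum_deviation.

Lemma natr_between (R : archiRealFieldType) (x : R) : 0 <= x ->
  exists N : nat, [/\ (0 < N)%N, x <= N%:R & N%:R <= x + 1].
Proof.
move=> x_ge0; have /andP[lo hi] := truncn_itv x_ge0.
exists (Num.truncn x).+1; split => //; first exact: ltW.
by rewrite -natr1 lerD2r.
Qed.

Lemma powR32_sqrt_mul (R : realType) (M e y : R) :
  0 < M -> 0 <= e -> 0 <= y ->
  M `^ (3 / 2) * Num.sqrt (y * (e ^+ 2 / M)) = e * M * Num.sqrt y.
Proof.
move=> M_gt0 e_ge0 y_ge0.
have -> : 3 / 2 = 1 + 2^-1 :> R by field.
rewrite powRD; last by rewrite (gt_eqF M_gt0) implybT.
rewrite powRr1 ?ltW // powR12_sqrt ?ltW //.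
rewrite -mulrA -sqrtrM ?ltW //.
have -> : M * (y * (e ^+ 2 / M)) = e ^+ 2 * y by field; rewrite gt_eqF.
by rewrite sqrtrM ?sqr_ge0 // sqrtr_sqr ger0_norm //; ring.
Qed.

Lemma fifth_root_split (R : realType) (a n K : R) :
  1 <= a -> 0 <= K -> K ^+ 5 * a <= n ->
  exists u w : R, [/\ 1 <= u, K <= w, a = u ^+ 5, n = (w * u) ^+ 5 &
                      a `^ (4 / 5) * n `^ (1 / 5) = u ^+ 5 * w].
Proof.
move=> a_ge1 K_ge0 Kan.
have n_ge0 : 0 <= n by apply: le_trans Kan; rewrite mulr_ge0 ?exprn_ge0 //; lra.
have rootX x k : 0 <= x -> (x `^ (1 / 5)) ^+ k = x `^ (k%:R / 5).
  by move=> x_ge0; rewrite -powR_mulrn ?powR_ge0 // -powRrM mul1r mulrC.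
have rootK x : 0 <= x -> (x `^ (1 / 5)) ^+ 5 = x.
  by move=> x_ge0; rewrite rootX // divff ?pnatr_eq0 // powRr1.
pose u := a `^ (1 / 5); pose v := n `^ (1 / 5).
have u5 : u ^+ 5 = a by apply: rootK; lra.
have v5 : v ^+ 5 = n by exact: rootK.
have u_ge1 : 1 <= u.
  by rewrite -(ler_pXn2r (_ : (0 < 5)%N)) ?nnegrE ?powR_ge0 // expr1n u5.
have u_gt0 : 0 < u by lra.
have vu : v / u * u = v by rewrite divfK ?gt_eqF.
exists u, (v / u); split => //.
- rewrite ler_pdivlMr // -(ler_pXn2r (_ : (0 < 5)%N)) ?nnegrE ?powR_ge0 //.
    by rewrite exprMn u5 v5.
  by rewrite mulr_ge0 //; lra.
- by rewrite vu v5.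
have -> : a `^ (4 / 5) = u ^+ 4 by rewrite /u rootX //; lra.
by rewrite -/v; field; rewrite gt_eqF.
Qed.

Lemma two_tails_le (R : realType) (g u w Nr : R) :
  4 <= w -> 6 <= g * w -> 1 <= u -> w ^+ 4 <= Nr <= w ^+ 4 + 1 ->
  expR (- ((w * u) ^+ 5 / Nr))
    + (w * u) ^+ 5 * expR (- (g * u ^+ 5 * Num.sqrt Nr))
  <= expR (- (u ^+ 5 * w / 4)).
Proof.
move=> w_ge4 gw_ge6 u_ge1 /andP[Nr_lo Nr_hi].
have w_le_w4 : w <= w ^+ 4 by rewrite ler_eXnr //; lra.
have u_le_u5 : u <= u ^+ 5 by rewrite ler_eXnr.
have Nr_gt0 : 0 < Nr by lra.
set X := u ^+ 5 * w.
have X_ge4 : 4 <= X.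
  have : 0 <= (u ^+ 5 - 1) * w by rewrite mulr_ge0 //; lra.
  rewrite /X; lra.
have first : expR (- ((w * u) ^+ 5 / Nr)) <= expR (- (X / 2)).
  rewrite ler_expR lerN2 ler_pdivlMr //.
  have -> : (w * u) ^+ 5 = X / 2 * (2 * w ^+ 4) by rewrite /X; field.
  by apply: ler_wpM2l; lra.
have second :
    (w * u) ^+ 5 * expR (- (g * u ^+ 5 * Num.sqrt Nr)) <= expR (- (X / 2)).
  have wu_le : (w * u) ^+ 5 <= expR (5 * X).
    have wuX : w * u <= X by rewrite /X mulrC; apply: ler_wpM2r; lra.
    apply: (@le_trans _ _ (expR (w * u) ^+ 5)).
      apply: lerXn2r; rewrite ?nnegrE ?expR_ge0 ?mulr_ge0 //; try lra.
      by have := expR_ge1Dx (w * u); lra.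
    by rewrite -expRM_natl ler_expR; lra.
  have g_gt0 : 0 < g by nra.
  have sqrt_ge : w ^+ 2 <= Num.sqrt Nr.
    have -> : w ^+ 2 = Num.sqrt ((w ^+ 2) ^+ 2).
      by rewrite sqrtr_sqr ger0_norm // exprn_ge0 //; lra.
    by apply: ler_wsqrtr; rewrite -exprM; exact: Nr_lo.
  have gX : 6 * X <= g * u ^+ 5 * Num.sqrt Nr.
    apply: (@le_trans _ _ (g * w * X)); first by apply: ler_wpM2r; lra.
    have -> : g * w * X = g * u ^+ 5 * w ^+ 2 by rewrite /X; ring.
    by apply: ler_wpM2l => //; rewrite mulr_ge0 ?exprn_ge0 //; lra.
  apply: le_trans (ler_wpM2r (expR_ge0 _) wu_le) _.
  by rewrite -expRD ler_expR; lra.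
have two : 2 <= expR (X / 4) by have := expR_ge1Dx (X / 4); lra.
have -> : - (X / 4) = - (X / 2) + X / 4 by field.
rewrite expRD.
have : 0 <= expR (- (X / 2)) * (expR (X / 4) - 2).
  by rewrite mulr_ge0 ?expR_ge0 ?subr_ge0.
lra.
Qed.

Theorem lemmaA2 (R : realType) (c' c11 : R) (hc' : 0 < c') (hc11 : 0 < c11) :
  exists c1 c2 c3 : R, [/\ 0 < c1, 0 < c2 & 0 < c3] /\
  forall (eps M : R), 0 < eps -> 1 / eps <= M ->
  forall (d : measure_display) (T : measurableType d) (P : probability T R)
         (Phi : nat -> T -> R),
    iid P Phi ->
    (forall i x, 0 <= Phi i x) ->
    (forall z : R, 4 * eps ^+ 2 / M <= z ->
       (P [set x | (z < Phi 0%N x)%R] <=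
         (expR (- c' * M `^ (3 / 2) * Num.sqrt z)%R)%:E)%E) ->
    ('E_P[Phi 0%N] <= (c11 * eps ^+ 2 / M)%R%:E)%E ->
    forall n : nat, c3 * eps * M <= n%:R ->
      (P [set x | (4 * c11 * n%:R * (eps ^+ 2 / M) <= \sum_(i < n) Phi i x)%R]
       <= ((1 + c1 / (n%:R `^ (2 / 5) * (eps * M) `^ (8 / 5)))
           * expR (- c2 * (eps * M) `^ (4 / 5) * n%:R `^ (1 / 5)))%R%:E)%E.
Proof.
pose g := c' * Num.sqrt (c11 / 2).
have g_gt0 : 0 < g by rewrite mulr_gt0 // sqrtr_gt0 divr_gt0.
(* K ensures 4 <= w, 6 <= g w and 8 <= c11 N below. *)
pose K := Num.max 4 (Num.max (6 / g) (8 / c11)).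
have K_ge4 : 4 <= K by rewrite le_max lexx.
have gK_ge6 : 6 <= g * K by rewrite mulrC -ler_pdivrMr // !le_max lexx orbT.
have cK_ge8 : 8 <= c11 * K by rewrite mulrC -ler_pdivrMr // !le_max lexx !orbT.
exists 1, (1 / 4), (K ^+ 5); split; first by split; rewrite ?exprn_gt0 //; lra.
move=> eps M eps_gt0 epsM d T P Phi iidPhi Phi_ge0 tail mean n n_large.
have M_gt0 : 0 < M by apply: lt_le_trans epsM; rewrite divr_gt0.
have a_ge1 : 1 <= eps * M by move: epsM; rewrite ler_pdivrMr // mulrC.
have K_ge0 : 0 <= K by lra.
have Ka : K ^+ 5 * (eps * M) <= n%:R by rewrite mulrA.
have [u [w [u_ge1 Kw a_u n_wu aX]]] := fifth_root_split _ _ _ _ a_ge1 K_ge0 Ka.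
have w_ge4 : 4 <= w := le_trans K_ge4 Kw.
have [N [N_gt0 N_lo N_hi]] :
    exists N : nat, [/\ (0 < N)%N, w ^+ 4 <= N%:R & N%:R <= w ^+ 4 + 1].
  by apply: natr_between; rewrite exprn_ge0 //; lra.
pose h := c11 / 2 * (eps ^+ 2 / M).
have h_gt0 : 0 < h by rewrite mulr_gt0 ?divr_gt0 ?exprn_gt0.
have Nh_ge : 4 * eps ^+ 2 / M <= N%:R * h.
  have cN : c11 * K <= c11 * N%:R.
    apply: ler_wpM2l; first exact: (ltW hc11).
    by apply: le_trans Kw (le_trans _ N_lo); rewrite ler_eXnr //; lra.
  have -> : N%:R * h = c11 * N%:R / 2 * (eps ^+ 2 / M) by rewrite /h; ring.
  rewrite -mulrA; apply: ler_wpM2r; last lra.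
  by rewrite ltW // divr_gt0 // exprn_gt0.
rewrite (_ : 4 * c11 * n%:R * (eps ^+ 2 / M) = 8 * n%:R * h); last first.
  by rewrite /h; field; rewrite gt_eqF.
rewrite (_ : c11 * eps ^+ 2 / M = 2 * h) in mean; last first.
  by rewrite /h; field; rewrite gt_eqF.
apply: le_trans (iid_sum_ge_level_le iidPhi Phi_ge0 _ _ _ _ h_gt0 N_gt0 mean
  (tail _ Nh_ge)) _.
have -> : - c' * M `^ (3 / 2) * Num.sqrt (N%:R * h) =
          - (g * u ^+ 5 * Num.sqrt N%:R).
  have y_ge0 : 0 <= N%:R * (c11 / 2) by rewrite mulr_ge0 // divr_ge0 // ltW.
  have -> : N%:R * h = N%:R * (c11 / 2) * (eps ^+ 2 / M) by rewrite /h mulrA.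
  rewrite -mulrA powR32_sqrt_mul // ?ltW //.
  by rewrite sqrtrM ?ler0n // a_u /g; ring.
have -> : - (1 / 4) * (eps * M) `^ (4 / 5) * n%:R `^ (1 / 5) =
          - (u ^+ 5 * w / 4).
  by rewrite -mulrA aX; field.
rewrite lee_fin; apply: le_trans (_ : _ <= expR (- (u ^+ 5 * w / 4))) _.
  have gw : 6 <= g * w.
    by apply: le_trans gK_ge6 _; apply: ler_wpM2l => //; exact: ltW.
  by rewrite n_wu; apply: two_tails_le; rewrite ?N_lo ?N_hi.
apply: ler_peMl; first exact: expR_ge0.
by rewrite lerDl; apply: divr_ge0 => //; apply: mulr_ge0; exact: powR_ge0.
Qed.
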